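(* Let $n\ge 4$ and let $Q_F(n)$ be the reduced quiver of the GL$_2$-dimer of the fan triangulation of the $n$-gon whose diagonals are $v_1v_{k+2}$, $k=1,\dots,n-3$. Then $Q_F(n)$ has exactly $2n$ boundary vertices $1,\dots,2n$ and $n-3$ internal vertices $i_1,\dots,i_{n-3}$, and its arrows are exactly: the $2n+2$ arrows between boundary vertices $$x_k:k-1\to k\ (k\in[1,2n],\ \text{indices mod }2n),\qquad y_4:4\to 2,\qquad y_{2n}:2n\to 2n-2,$$ and the arrows $$\alpha_0:2\to i_1,\quad \alpha_k:i_k\to i_{k+1}\ (1\le k<n-3),\quad \alpha_{n-3}:i_{n-3}\to 2n,$$ $$\beta_{k-1}:i_k\to 2k+2\ (1\le k\le n-3),\qquad \gamma_k:2k+4\to i_k\ (1\le k\le n-3).$$ For $n=3$, $Q_F(3)$ has the six boundary vertices $1,\dots,6$, no internal vertices, and arrows $x_1,\dots,x_6$, $4\to2$, $2\to6$, $6\to4$.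
   Context: A triangulation of a convex polygon with vertices $v_1,\dots,v_n$ (anticlockwise) is a fan triangulation at $v_1$ if all its $n-3$ diagonals are incident with $v_1$. GL$_m$-dimer and its quiver: let $m\ge2$, $n\ge 3$, and let $T$ be a triangulation of a convex $n$-gon $P$ with vertices $v_1,\dots,v_n$ in anticlockwise order. Subdivide every triangle of $T$ by $m-1$ equidistant lines parallel to each of its sides into $m^2$ small triangles (upward ones, i.e. translates of the big triangle, and downward ones). Put a black node at the midpoint of each of the $m$ segments into which each side of each triangle (edge of $P$ or diagonal of $T$) is cut, a black node in every downward small triangle, and a white node in every upward small triangle. Join two nodes of different colour if they belong to the same small triangle or their small triangles share a side. This bipartite graph $G$ is the GL$_m$-dimer of $T$. Its quiver has one vertex for each connected component of $P\setminus G$ and, for each edge of $G$, one arrow between the two components it separates, oriented so that the white endpoint lies to its left; each white node gives an anticlockwise face and each black node of degree $\ge2$ a clockwise face; arrows in one face are boundary arrows, those in two faces internal arrows. Every 2-cycle of internal arrows is removed using the relations from the natural potential (on $G$: a bivalent black node is deleted and its two white neighbours are merged); the result is the reduced quiver. Vertices incident with boundary arrows are boundary vertices, the others internal. There are $mn$ boundary vertices, labelled $1,\dots,mn$ anticlockwise so that vertex $(j-1)m+1$ is the component at the corner $v_j$; the boundary arrows are $x_k:k-1\to k$. Here $m=2$. *)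

From Stdlib Require Import Arith Bool List Permutation Relations.
Import ListNotations.

(* Vertices v_1,...,v_n of the convex n-gon P (anticlockwise) are the  *)
(* numbers 1..n.  A triangulation is a list of triangles, each given   *)
(* by its three corners listed anticlockwise.                          *)

Definition succv (n a : nat) : nat := if a =? n then 1 else S a.
Definition predv (n a : nat) : nat := if a =? 1 then n else pred a.

Definition fan (n : nat) : list (nat * nat * nat) :=
  map (fun k => (1, k + 1, k + 2)) (seq 1 (n - 2)).

(* Nodes of the plane graph  G u dP  (G = GL_2-dimer, dP = boundary).  *)
(*   PV j    : the corner v_j of P (a vertex of dP only)               *)
(*   Wh i x  : white node in the upward small triangle at corner x of   *)
(*             the i-th triangle (0-based index in the list)           *)
(*   Ce i    : black node in the downward (central) small triangle of  *)
(*             the i-th triangle                                       *)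
(*   SB a b  : black node at the midpoint of the half of the side ab   *)
(*             that contains a (shared by both triangles if ab is a    *)
(*             diagonal)                                               *)
Inductive node : Type :=
| PV (j : nat)
| Wh (i x : nat)
| Ce (i : nat)
| SB (a b : nat).

Scheme Equality for node.

Definition node_eqb (u v : node) : bool :=
  if node_eq_dec u v then true else false.

Definition has_corner (t : nat * nat * nat) (x : nat) : bool :=
  let '(a, b, c) := t in (x =? a) || (x =? b) || (x =? c).

Definition next_prev (t : nat * nat * nat) (x : nat) : nat * nat :=
  let '(a, b, c) := t in
  if x =? a then (b, c) else if x =? b then (c, a) else (a, b).

Definition corners (t : nat * nat * nat) : list nat :=
  let '(a, b, c) := t in [a; b; c].

Definition tri (T : list (nat * nat * nat)) (i : nat) : nat * nat * nat :=
  nth i T (0, 0, 0).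

Definition side_whites (T : list (nat * nat * nat)) (a b : nat) : list node :=
  map (fun i => Wh i a)
      (filter (fun i => has_corner (tri T i) a && has_corner (tri T i) b
                        && negb (a =? b))
              (seq 0 (length T))).

(* Rotation system: neighbours of each node of G u dP, listed in       *)
(* anticlockwise order (read off from the geometric construction).     *)
Definition rot (n : nat) (T : list (nat * nat * nat)) (u : node) : list node :=
  match u with
  | PV j => [SB j (succv n j); SB j (predv n j)]
  | Wh i x => let '(y, z) := next_prev (tri T i) x in [SB x y; Ce i; SB x z]
  | Ce i => map (fun x => Wh i x) (corners (tri T i))
  | SB a b =>
      let ws := side_whites T a b in
      if b =? succv n a then [SB b a] ++ ws ++ [PV a]
      else if b =? predv n a then [PV a] ++ ws ++ [SB b a]
      else ws
  end.

Definition nodes (n : nat) (T : list (nat * nat * nat)) : list node :=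
  map PV (seq 1 n)
  ++ flat_map (fun i =>
       Ce i :: flat_map (fun x => let '(y, z) := next_prev (tri T i) x in
                                  [Wh i x; SB x y; SB x z])
                        (corners (tri T i)))
       (seq 0 (length T)).

Definition is_dart (n : nat) T (d : node * node) : Prop :=
  In (fst d) (nodes n T) /\ In (snd d) (rot n T (fst d)).

Fixpoint prev_aux (last : node) (l : list node) (v : node) : node :=
  match l with
  | [] => v
  | w :: l' => if node_eqb w v then last else prev_aux w l' v
  end.
Definition prevc (l : list node) (v : node) : node :=
  match l with
  | [] => v
  | w :: _ => if node_eqb w v then last l w else prev_aux w (tl l) v
  end.

(* face-tracing permutation: successor of a dart along the face lying
   to its LEFT (turn as far left as possible at the head) *)
Definition phi n T (d : node * node) : node * node :=
  let '(u, v) := d in (v, prevc (rot n T v) u).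

(* two darts have the same face on their left: faces of the plane map
   G u dP = connected components of P \ G (plus the outer face) *)
Definition same_face n T : relation (node * node) :=
  clos_refl_sym_trans _ (fun d e => is_dart n T d /\ e = phi n T d).

(* the outer face: on the left of the clockwise boundary dart v_2 -> v_1 *)
Definition outer_dart (n : nat) : node * node := (SB 1 2, PV 1).

(* a dart whose left face lies inside P, i.e. a quiver vertex *)
Definition inner_dart n T (d : node * node) : Prop :=
  is_dart n T d /\ ~ same_face n T d (outer_dart n).

(* the component of P \ G at the corner v_j, and the one at the
   midpoint of the polygon edge v_j v_{j+1} *)
Definition corner_dart n (j : nat) : node * node := (PV j, SB j (succv n j)).
Definition edge_dart n (j : nat) : node * node :=
  (SB j (succv n j), SB (succv n j) j).

Definition dimer_edges (T : list (nat * nat * nat)) : list (node * node) :=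
  flat_map (fun i =>
    flat_map (fun x => let '(y, z) := next_prev (tri T i) x in
                       [(Wh i x, SB x y); (Wh i x, SB x z); (Wh i x, Ce i)])
             (corners (tri T i)))
    (seq 0 (length T)).

Definition black_degree (T : list (nat * nat * nat)) (b : node) : nat :=
  length (filter (fun e => node_eqb (snd e) b) (dimer_edges T)).

(* The arrow of the quiver dual to the edge e = (w, b): it goes from the
   face on the left of the dart b -> w to the face on its right (= left
   face of w -> b), so that the white endpoint lies to its left.  A face
   is represented by any dart having it on its left. *)
Definition arrow_src (e : node * node) : node * node := (snd e, fst e).
Definition arrow_tgt (e : node * node) : node * node := (fst e, snd e).

(* Reduction: a bivalent black node is deleted (together with its two
   edges, i.e. the two arrows of the corresponding 2-cycle) and its two
   white neighbours are merged; the faces are unchanged. *)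
Definition reduced_edges (T : list (nat * nat * nat)) : list (node * node) :=
  filter (fun e => negb (black_degree T (snd e) =? 2)) (dimer_edges T).

(* boundary arrows: lying in exactly one face of the quiver, i.e. dual to
   an edge whose black endpoint has degree 1 *)
Definition boundary_edge T (e : node * node) : Prop :=
  In e (reduced_edges T) /\ black_degree T (snd e) = 1.

Inductive qlabel : Type :=
| Bd (k : nat)
| Int (k : nat).

Definition valid_label (n : nat) (l : qlabel) : Prop :=
  match l with
  | Bd k => 1 <= k <= 2 * n
  | Int k => 1 <= k <= n - 3
  end.

Definition x_arrows (n : nat) : list (qlabel * qlabel) :=
  map (fun k => (Bd (if k =? 1 then 2 * n else k - 1), Bd k)) (seq 1 (2 * n)).

Definition QF_arrows (n : nat) : list (qlabel * qlabel) :=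
  x_arrows n
  ++ [(Bd 4, Bd 2); (Bd (2 * n), Bd (2 * n - 2))]
  ++ [(Bd 2, Int 1)]
  ++ map (fun k => (Int k, Int (k + 1))) (seq 1 (n - 4))
  ++ [(Int (n - 3), Bd (2 * n))]
  ++ map (fun k => (Int k, Bd (2 * k + 2))) (seq 1 (n - 3))
  ++ map (fun k => (Bd (2 * k + 4), Int k)) (seq 1 (n - 3)).

Definition QF3_arrows : list (qlabel * qlabel) :=
  x_arrows 3 ++ [(Bd 4, Bd 2); (Bd 2, Bd 6); (Bd 6, Bd 4)].

Definition reduced_quiver_is (n : nat) (T : list (nat * nat * nat))
    (A : list (qlabel * qlabel)) : Prop :=
  exists f : node * node -> qlabel,
    (forall d e, inner_dart n T d -> inner_dart n T e ->
                 (same_face n T d e <-> f d = f e))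
    /\ (forall d, inner_dart n T d -> valid_label n (f d))
    /\ (forall l, valid_label n l -> exists d, inner_dart n T d /\ f d = l)
    /\ (forall j, 1 <= j <= n -> f (corner_dart n j) = Bd (2 * j - 1)
                                 /\ f (edge_dart n j) = Bd (2 * j))
    /\ (forall d, inner_dart n T d ->
          ((exists e, boundary_edge T e /\
               (same_face n T d (arrow_src e) \/ same_face n T d (arrow_tgt e)))
           <-> exists k, f d = Bd k))
    /\ Permutation (map (fun e => (f (arrow_src e), f (arrow_tgt e)))
                        (reduced_edges T)) A.

(* The fan triangulation is explicit enough that its GL_2-dimer, the rotation
   system of G u dP and the face-tracing permutation phi can all be written
   down in closed form.  Faces are then computed by a labelling [face_of] of
   the darts which is invariant under phi, together with a potential
   [dist_to_rep] which strictly decreases along phi until a chosen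
   representative dart of the face is reached; hence two darts bound the same
   face iff they carry the same label, and the labels are exactly the
   vertices 1..2n, i_1..i_{n-3} and the outer face.  Every black node on a
   diagonal v_1 v_{k+2} has degree 2 and is removed by the reduction, the
   remaining edges of the k-th triangle contribute a short explicit list of
   arrows, and concatenating these lists over k is a rearrangement of the
   arrows of Q_F(n). *)

From Stdlib Require Import Arith List Permutation Relations Lia Sorting.Sorted.
Import ListNotations.

Lemma StronglySorted_seq s m : StronglySorted lt (seq s m).
Proof.
  revert s; induction m; intro s; simpl; constructor; auto.
  apply Forall_forall. intros x Hx. apply in_seq in Hx. lia.
Qed.

Lemma StronglySorted_filter (p : nat -> bool) l :
  StronglySorted lt l -> StronglySorted lt (filter p l).
Proof.
  induction 1 as [|a l _ IH Ha]; simpl; [constructor|].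
  destruct (p a); auto. constructor; auto.
  apply Forall_forall. intros x Hx. apply filter_In in Hx.
  rewrite Forall_forall in Ha. apply Ha, Hx.
Qed.

Lemma StronglySorted_lt_ext (l1 l2 : list nat) :
  StronglySorted lt l1 -> StronglySorted lt l2 ->
  (forall x, In x l1 <-> In x l2) -> l1 = l2.
Proof.
  revert l2; induction l1 as [|a l1 IH]; intros l2 S1 S2 H.
  - destruct l2 as [|b l2]; auto. exfalso. apply (proj2 (H b)). left; auto.
  - destruct l2 as [|b l2]. { exfalso. apply (proj1 (H a)). left; auto. }
    inversion S1 as [|? ? T1 F1]; subst. inversion S2 as [|? ? T2 F2]; subst.
    rewrite Forall_forall in F1, F2.
    assert (Eab : a = b).
    { destruct (proj1 (H a) (or_introl eq_refl)) as [E|E]; auto.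
      destruct (proj2 (H b) (or_introl eq_refl)) as [E'|E']; auto.
      apply F2 in E. apply F1 in E'. lia. }
    subst. f_equal. apply IH; auto. intro x. split; intro Hx.
    + destruct (proj1 (H x) (or_intror Hx)); auto. subst. apply F1 in Hx. lia.
    + destruct (proj2 (H x) (or_intror Hx)); auto. subst. apply F2 in Hx. lia.
Qed.

Lemma flat_map_ext_in {A B} (f g : A -> list B) l :
  (forall x, In x l -> f x = g x) -> flat_map f l = flat_map g l.
Proof. induction l; simpl; intros H; auto. rewrite H by auto. f_equal. auto. Qed.

Lemma filter_flat_map {A B} (q : B -> bool) (F : A -> list B) l :
  filter q (flat_map F l) = flat_map (fun i => filter q (F i)) l.
Proof. induction l; simpl; auto. rewrite filter_app. f_equal. auto. Qed.

Lemma map_flat_map {A B C} (g : B -> C) (F : A -> list B) l :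
  map g (flat_map F l) = flat_map (fun i => map g (F i)) l.
Proof. induction l; simpl; auto. rewrite map_app. f_equal. auto. Qed.

Lemma flat_map_singleton {A B} (h : A -> B) l : flat_map (fun i => [h i]) l = map h l.
Proof. induction l; simpl; f_equal; auto. Qed.

Lemma list_sum_map_indicator {A} (p : A -> bool) (c : nat) (g : A -> nat) l :
  (forall x, In x l -> g x = if p x then c else 0) ->
  list_sum (map g l) = length (filter p l) * c.
Proof.
  induction l; simpl; intro H; auto. rewrite H by auto.
  destruct (p a); simpl; rewrite IHl; auto.
Qed.

Lemma Permutation_flat_map_app {A B} (f g : A -> list B) l :
  Permutation (flat_map (fun i => f i ++ g i) l) (flat_map f l ++ flat_map g l).
Proof.
  induction l as [|a l IH]; simpl; auto.
  rewrite <- !app_assoc. apply Permutation_app_head.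
  eapply perm_trans; [apply Permutation_app_head; exact IH|].
  apply Permutation_app_swap_app.
Qed.

Lemma Permutation_flat_map_pointwise {A B} (f g : A -> list B) l :
  (forall i, In i l -> Permutation (f i) (g i)) ->
  Permutation (flat_map f l) (flat_map g l).
Proof. induction l; simpl; intro H; auto. apply Permutation_app; auto. Qed.

(* A decision procedure for [Permutation L R] on explicit lists whose entries
   are equal up to arithmetic: each head of L (or block [B ++ _] of L) is
   located in R and moved to the front. *)
Lemma perm_find_here {X} (x y : X) t : x = y -> Permutation (y :: t) (x :: t).
Proof. intros; subst; auto. Qed.
Lemma perm_find_cons {X} (x y : X) t t' :
  Permutation t (x :: t') -> Permutation (y :: t) (x :: y :: t').
Proof. intro H. eapply perm_trans; [apply perm_skip; exact H|]. apply perm_swap. Qed.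
Lemma perm_find_app {X} (x : X) B t t' :
  Permutation t (x :: t') -> Permutation (B ++ t) (x :: B ++ t').
Proof.
  intro H. eapply perm_trans; [apply Permutation_app_head; exact H|].
  apply Permutation_sym, Permutation_middle.
Qed.
Lemma perm_find_block_here {X} (B : list X) t : Permutation (B ++ t) (B ++ t).
Proof. auto. Qed.
Lemma perm_find_block_cons {X} (B : list X) y t t' :
  Permutation t (B ++ t') -> Permutation (y :: t) (B ++ y :: t').
Proof. intro H. eapply perm_trans; [apply perm_skip; exact H|]. apply Permutation_middle. Qed.
Lemma perm_find_block_app {X} (B C : list X) t t' :
  Permutation t (B ++ t') -> Permutation (C ++ t) (B ++ C ++ t').
Proof.
  intro H. eapply perm_trans; [apply Permutation_app_head; exact H|].
  rewrite !app_assoc. apply Permutation_app_tail, Permutation_app_comm.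
Qed.
Lemma perm_cancel_head {X} (x : X) L R R' :
  Permutation R (x :: R') -> Permutation L R' -> Permutation (x :: L) R.
Proof. intros H1 H2. eapply perm_trans; [apply perm_skip; exact H2|]. apply Permutation_sym; auto. Qed.
Lemma perm_cancel_block {X} (B : list X) L R R' :
  Permutation R (B ++ R') -> Permutation L R' -> Permutation (B ++ L) R.
Proof. intros H1 H2. eapply perm_trans; [apply Permutation_app_head; exact H2|]. apply Permutation_sym; auto. Qed.

Ltac perm_find eqtac :=
  first [ apply perm_find_here; solve [eqtac]
        | apply perm_find_cons; perm_find eqtac
        | apply perm_find_app; perm_find eqtac ].
Ltac perm_find_block :=
  first [ apply perm_find_block_here
        | apply perm_find_block_cons; perm_find_block
        | apply perm_find_block_app; perm_find_block ].
Ltac perm_solve eqtac :=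
  match goal with
  | |- Permutation [] [] => apply perm_nil
  | |- Permutation (?B ++ _) _ => eapply perm_cancel_block; [perm_find_block | perm_solve eqtac]
  | |- Permutation (_ :: _) _ => eapply perm_cancel_head; [perm_find eqtac | perm_solve eqtac]
  end.

#[local] Arguments Nat.eqb : simpl never.
#[local] Arguments Nat.leb : simpl never.
#[local] Arguments Nat.ltb : simpl never.

Ltac subst_var_eq E :=
  match type of E with
  | ?a = ?b => first [is_var a; subst a | is_var b; subst b | idtac]
  end.

Ltac no_if t := match t with
  | context [if _ then _ else _] => fail 1
  | _ => idtac end.

Ltac split_nat_test :=
  match goal with
  | |- context [Nat.eqb ?a ?b] => no_if a; no_if b; let E := fresh "E" in
      destruct (Nat.eqb a b) eqn:E;
      [apply Nat.eqb_eq in E; try subst_var_eq E | apply Nat.eqb_neq in E]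
  | |- context [Nat.leb ?a ?b] => no_if a; no_if b; let E := fresh "E" in
      destruct (Nat.leb a b) eqn:E; [apply Nat.leb_le in E | apply Nat.leb_gt in E]
  | |- context [Nat.ltb ?a ?b] => no_if a; no_if b; let E := fresh "E" in
      destruct (Nat.ltb a b) eqn:E; [apply Nat.ltb_lt in E | apply Nat.ltb_ge in E]
  end; cbv beta iota delta [andb orb negb].

Ltac split_nat_tests :=
  repeat (try (exfalso; lia); split_nat_test);
  cbv beta iota delta [andb orb negb]; try (exfalso; lia).

Definition node_beq (u v : node) : bool :=
  match u, v with
  | PV a, PV b => a =? b
  | Wh i x, Wh j y => (i =? j) && (x =? y)
  | Ce i, Ce j => i =? j
  | SB a b, SB c d => (a =? c) && (b =? d)
  | _, _ => false
  end.

Lemma node_beq_spec u v : node_beq u v = true <-> u = v.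
Proof.
  destruct u, v; simpl; split; intro H; try discriminate; try (inversion H; fail);
  repeat match goal with
  | H : (_ && _)%bool = true |- _ => apply andb_prop in H; destruct H
  | H : (_ =? _) = true |- _ => apply Nat.eqb_eq in H
  end; subst; auto;
  inversion H; subst; rewrite ?Nat.eqb_refl; auto.
Qed.

(* [node_eqb] is defined through a decision procedure and does not reduce on
   open terms; [node_beq] does. *)
Lemma node_eqb_beq u v : node_eqb u v = node_beq u v.
Proof.
  unfold node_eqb. destruct (node_eq_dec u v) as [e|e].
  - subst. symmetry. apply node_beq_spec. auto.
  - symmetry. destruct (node_beq u v) eqn:E; auto. apply node_beq_spec in E. contradiction.
Qed.

Lemma prev_aux_In w l v : In v l -> In (prev_aux w l v) (w :: l).
Proof.
  revert w; induction l as [|a l IH]; intros w Hv; simpl in *; [contradiction|].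
  destruct (node_eqb a v) eqn:E; [left; auto|].
  destruct Hv as [Hv|Hv].
  - subst. rewrite node_eqb_beq in E.
    assert (node_beq v v = true) by (apply node_beq_spec; auto). congruence.
  - right. apply IH. auto.
Qed.

Lemma last_In_cons (l : list node) w b : In (last (b :: l) w) (b :: l).
Proof.
  revert b. induction l as [|c l IH]; intro b; [left; auto|].
  change (last (b :: c :: l) w) with (last (c :: l) w). right. apply IH.
Qed.

Lemma prevc_In l v : In v l -> In (prevc l v) l.
Proof.
  destruct l as [|w l]; simpl; intro Hv; [contradiction|].
  destruct (node_eqb w v) eqn:E.
  - apply last_In_cons.
  - destruct Hv as [Hv|Hv].
    + subst. rewrite node_eqb_beq in E.
      assert (node_beq v v = true) by (apply node_beq_spec; auto). congruence.
    + apply prev_aux_In. auto.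
Qed.

Ltac eval_prevc :=
  unfold prevc; cbn [prev_aux last tl map app]; rewrite ?node_eqb_beq; cbn [node_beq].

Lemma length_fan n : length (fan n) = n - 2.
Proof. unfold fan. rewrite length_map, length_seq. auto. Qed.

Lemma tri_fan n i : i < n - 2 -> tri (fan n) i = (1, i + 2, i + 3).
Proof.
  intro H. unfold tri, fan.
  set (g := fun k : nat => (1, k + 1, k + 2)).
  assert (E : nth i (map g (seq 1 (n - 2))) (0,0,0) = g (nth i (seq 1 (n-2)) 0)).
  { rewrite (nth_indep _ (0,0,0) (g 0)) by (rewrite length_map, length_seq; lia).
    apply map_nth. }
  rewrite E, seq_nth by lia. unfold g. f_equal; [f_equal|]; lia.
Qed.

Definition fan_node (n : nat) (u : node) : Prop :=
  match u with
  | PV j => 1 <= j <= n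
  | Ce i => i + 3 <= n
  | Wh i x => i + 3 <= n /\ (x = 1 \/ x = i + 2 \/ x = i + 3)
  | SB a b => (a = 1 /\ 2 <= b <= n) \/ (b = 1 /\ 2 <= a <= n)
              \/ (2 <= a /\ b = a + 1 /\ b <= n) \/ (2 <= b /\ a = b + 1 /\ a <= n)
  end.

Definition fan_spoke_triangles (n c : nat) : list nat :=
  (if 3 <=? c then [c - 3] else []) ++ (if c <? n then [c - 2] else []).

Definition fan_side_triangles (n a b : nat) : list nat :=
  if a =? 1 then fan_spoke_triangles n b else if b =? 1 then fan_spoke_triangles n a
  else if b =? a + 1 then [a - 2] else [b - 2].

Lemma side_whites_fan n a b : 3 <= n -> fan_node n (SB a b) ->
  side_whites (fan n) a b = map (fun i => Wh i a) (fan_side_triangles n a b).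
Proof.
  intros Hn Hv. unfold side_whites. f_equal. rewrite length_fan.
  apply StronglySorted_lt_ext.
  - apply StronglySorted_filter, StronglySorted_seq.
  - unfold fan_side_triangles, fan_spoke_triangles. simpl in Hv.
    split_nat_tests; simpl; repeat constructor; simpl; lia.
  - intro x. rewrite filter_In, in_seq.
    unfold fan_side_triangles, fan_spoke_triangles. simpl in Hv. split.
    + intros [Hx Hp]. rewrite tri_fan in Hp by lia. simpl in Hp.
      revert Hp. split_nat_tests; simpl; intros; try discriminate; lia.
    + intro Hx.
      assert (x < n - 2) by (revert Hx; split_nat_tests; simpl; intros; lia).
      split; [lia|]. rewrite tri_fan by lia. simpl. revert Hx.
      split_nat_tests; simpl; intros; lia.
Qed.

Definition fan_rot (n : nat) (u : node) : list node :=
  match u with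
  | PV j => [SB j (succv n j); SB j (predv n j)]
  | Wh i x => if x =? 1 then [SB 1 (i+2); Ce i; SB 1 (i+3)]
              else if x =? i+2 then [SB x (i+3); Ce i; SB x 1]
              else [SB x 1; Ce i; SB x (i+2)]
  | Ce i => [Wh i 1; Wh i (i+2); Wh i (i+3)]
  | SB a b => let ws := map (fun i => Wh i a) (fan_side_triangles n a b) in
              if b =? succv n a then [SB b a] ++ ws ++ [PV a]
              else if b =? predv n a then [PV a] ++ ws ++ [SB b a] else ws
  end.

Lemma rot_fan n u : 3 <= n -> fan_node n u -> rot n (fan n) u = fan_rot n u.
Proof.
  intros Hn Hv. destruct u; simpl in Hv |- *; auto.
  - rewrite tri_fan by lia. simpl. destruct Hv as [Hi Hx]. split_nat_tests; reflexivity.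
  - rewrite tri_fan by lia. reflexivity.
  - rewrite side_whites_fan by auto. reflexivity.
Qed.

Lemma In_nodes_fan n u : 3 <= n -> (In u (nodes n (fan n)) <-> fan_node n u).
Proof.
  intro Hn. unfold nodes. rewrite in_app_iff, in_map_iff, in_flat_map, length_fan.
  split.
  - intros [[j [E Hj]] | [i [Hi Hu]]].
    + subst. apply in_seq in Hj. simpl. lia.
    + apply in_seq in Hi. rewrite tri_fan in Hu by lia. simpl in Hu.
      revert Hu. split_nat_tests; simpl; intros Hu;
      repeat (destruct Hu as [Hu|Hu]; [subst; simpl; lia|]); contradiction.
  - destruct u as [j|i x|i|a b]; simpl; intro Hv.
    + left. exists j. split; auto. apply in_seq. lia.
    + right. exists i. split; [apply in_seq; lia|]. rewrite tri_fan by lia. simpl.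
      split_nat_tests; destruct Hv as [_ [Hx|[Hx|Hx]]]; subst; simpl; auto 20; exfalso; lia.
    + right. exists i. split; [apply in_seq; lia|]. rewrite tri_fan by lia. simpl. auto.
    + right.
      assert (Hi : exists i, i < n - 2 /\ (a = 1 \/ a = i + 2 \/ a = i + 3)
                             /\ (b = 1 \/ b = i + 2 \/ b = i + 3) /\ a <> b).
      { destruct Hv as [[Ha Hb]|[[Hb Ha]|[[Ha [Hb Hb']]|[Hb [Ha Ha']]]]]; subst.
        - destruct (Nat.eq_dec b n); [exists (b - 3) | exists (b - 2)]; lia.
        - destruct (Nat.eq_dec a n); [exists (a - 3) | exists (a - 2)]; lia.
        - exists (a - 2). lia.
        - exists (b - 2). lia. }
      destruct Hi as [i [Hi [Ha [Hb Hab]]]].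
      exists i. split; [apply in_seq; lia|]. rewrite tri_fan by lia. simpl.
      destruct Ha as [ -> | [ -> | -> ] ]; destruct Hb as [ -> | [ -> | -> ] ]; split_nat_tests;
        simpl; auto 20.
Qed.

Lemma is_dart_fan n u v : 3 <= n ->
  (is_dart n (fan n) (u, v) <-> fan_node n u /\ In v (fan_rot n u)).
Proof.
  intro Hn. unfold is_dart. simpl. rewrite In_nodes_fan by auto.
  split; intros [H1 H2]; split; auto; rewrite rot_fan in * by auto; auto.
Qed.

Ltac solve_In :=
  let eq := first [reflexivity | f_equal; lia | f_equal; [lia|lia]] in
  match goal with
  | |- _ = _ \/ _ => first [left; eq | right; solve_In]
  | |- _ = _ => eq
  end.

Ltac case_fan_rot H :=
  revert H; unfold fan_rot, fan_side_triangles, fan_spoke_triangles, succv, predv;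
  split_nat_tests; simpl; intro H;
  repeat (destruct H as [H|H]; [subst|]); try contradiction.

Lemma fan_rot_sym n u v : 3 <= n -> fan_node n u -> In v (fan_rot n u) ->
  fan_node n v /\ In u (fan_rot n v).
Proof.
  intros Hn Hu Hv. destruct u as [j|i x|i|a b]; simpl in Hu.
  all: case_fan_rot Hv.
  all: simpl; unfold fan_rot, fan_side_triangles, fan_spoke_triangles, succv, predv;
       split_nat_tests; simpl.
  all: try (split; [lia | solve_In]).
Qed.

(* Faces of G u dP: [Corner j] and [Edge j] are the boundary vertices 2j-1
   and 2j of the quiver (at the corner v_j and at the edge v_j v_{j+1}),
   [Inner k] is the internal vertex i_k. *)
Inductive face := Outer | Corner (j : nat) | Edge (j : nat) | Inner (k : nat).

Definition valid_face (n : nat) (f : face) : Prop :=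
  match f with
  | Outer => True
  | Corner j | Edge j => 1 <= j <= n
  | Inner k => 1 <= k <= n - 3
  end.

Definition face_of (n : nat) (d : node * node) : face :=
  match d with
  | (PV j, SB _ b) => if b =? succv n j then Corner j else Outer
  | (SB a b, PV _) => if b =? succv n a then Outer else Corner a
  | (SB a b, SB _ _) => if b =? succv n a then Edge a else Outer
  | (Ce i, Wh _ x) => if x =? 1 then (if i =? 0 then Edge 1 else Inner i)
                      else if x =? i+2 then Edge (i+2)
                      else if i =? n-3 then Edge n else Inner (i+1)
  | (Wh i x, Ce _) => if x =? 1 then (if i =? n-3 then Edge n else Inner (i+1))
                      else if x =? i+2 then (if i =? 0 then Edge 1 else Inner i)
                      else Edge (i+2)
  | (Wh i x, SB _ y) =>
      if x =? 1 then (if y =? i+2 then (if i =? 0 then Edge 1 else Inner i) else Corner 1)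
      else if x =? i+2 then (if y =? 1 then Corner x else Edge x)
      else if y =? 1 then (if i =? n-3 then Edge n else Inner (i+1)) else Corner x
  | (SB a b, Wh j _) =>
      if a =? 1 then (if j+2 =? b then Corner 1 else if b =? n then Edge n else Inner (b-2))
      else if b =? 1 then (if j+2 =? a then (if a =? 2 then Edge 1 else Inner (a-2)) else Corner a)
      else if b =? a+1 then Corner a else Edge (a-1)
  | _ => Outer
  end.

Definition face_rep (n : nat) (f : face) : node * node :=
  match f with
  | Outer => outer_dart n
  | Corner j => corner_dart n j
  | Edge j => edge_dart n j
  | Inner k => (SB (k+2) 1, Wh k (k+2))
  end.

(* A potential on darts which strictly decreases under phi except on the
   darts [face_rep n (face_of n d)], where it is 0. *)
Definition dist_to_rep (n : nat) (d : node * node) : nat :=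
  match d with
  | (PV j, SB _ b) => if b =? succv n j then 0 else if j =? 1 then 3*n-1 else 3*j-4
  | (SB a b, PV _) => if b =? succv n a then 3*(a-1) else 1
  | (SB a b, SB _ _) => if b =? succv n a then 0 else if a =? 1 then 3*n-2 else 3*a-5
  | (Ce i, Wh _ x) => if x =? 1 then (if i =? 0 then 2 else 6) else 2
  | (Wh i x, Ce _) => if x =? 1 then 3 else if x =? i+2 then (if i =? 0 then 3 else 7) else 3
  | (Wh i x, SB _ y) =>
      if x =? 1 then (if y =? i+2 then (if i =? 0 then 1 else 5) else 2*(n-3-i)+2)
      else if x =? i+2 then (if y =? 1 then (if i =? 0 then 2 else 4) else 1)
      else if y =? 1 then 1 else 2
  | (SB a b, Wh j _) =>
      if a =? 1 then (if j+2 =? b then 2*(n-b)+1 else 4)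
      else if b =? 1 then (if j+2 =? a then (if a =? 2 then 4 else 0) else 3)
      else if b =? a+1 then (if a =? 2 then 3 else 5) else 4
  | _ => 0
  end.

Lemma phi_fan_step n u v : 3 <= n -> fan_node n u -> In v (fan_rot n u) ->
  face_of n (v, prevc (fan_rot n v) u) = face_of n (u, v) /\
  (dist_to_rep n (u, v) = 0 \/
   dist_to_rep n (v, prevc (fan_rot n v) u) < dist_to_rep n (u, v)).
Proof.
  intros Hn Hu Hv. destruct u as [j|i x|i|a b]; simpl in Hu.
  all: case_fan_rot Hv.
  all: unfold fan_rot, fan_side_triangles, fan_spoke_triangles, succv, predv;
       split_nat_tests; eval_prevc;
       unfold face_of, dist_to_rep, succv, predv; split_nat_tests.
  all: try (split; [first [reflexivity | f_equal; lia] | lia]).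
Qed.

Lemma dist_to_rep_0 n u v : 3 <= n -> fan_node n u -> In v (fan_rot n u) ->
  dist_to_rep n (u, v) = 0 -> (u, v) = face_rep n (face_of n (u, v)).
Proof.
  intros Hn Hu Hv. destruct u as [j|i x|i|a b]; simpl in Hu.
  all: case_fan_rot Hv.
  all: unfold dist_to_rep, face_of, face_rep, outer_dart, corner_dart, edge_dart,
         succv, predv; split_nat_tests; intro Hm; try lia.
  all: repeat f_equal; lia.
Qed.

Lemma face_of_valid n u v : 3 <= n -> fan_node n u -> In v (fan_rot n u) ->
  valid_face n (face_of n (u, v)).
Proof.
  intros Hn Hu Hv. destruct u as [j|i x|i|a b]; simpl in Hu.
  all: case_fan_rot Hv.
  all: unfold face_of, valid_face, succv, predv; split_nat_tests; lia.
Qed.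

Lemma face_rep_spec n f : 3 <= n -> valid_face n f ->
  fan_node n (fst (face_rep n f)) /\ In (snd (face_rep n f)) (fan_rot n (fst (face_rep n f)))
  /\ face_of n (face_rep n f) = f.
Proof.
  intros Hn Hf. destruct f as [|j|j|k]; simpl in Hf |- *;
  unfold outer_dart, corner_dart, edge_dart, fan_rot, fan_side_triangles,
    fan_spoke_triangles, face_of, succv, predv; split_nat_tests; simpl.
  all: try (split; [lia | split; [solve_In | first [reflexivity | f_equal; lia]]]).
Qed.

Section FanFaces.
Variable n : nat.
Hypothesis Hn : 3 <= n.
Let T := fan n.

Lemma is_dart_phi d : is_dart n T d ->
  is_dart n T (phi n T d) /\ face_of n (phi n T d) = face_of n d /\
  (dist_to_rep n d = 0 \/ dist_to_rep n (phi n T d) < dist_to_rep n d).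
Proof.
  destruct d as [u v]. unfold T. rewrite is_dart_fan by auto. intros [Hu Hv].
  destruct (fan_rot_sym n u v Hn Hu Hv) as [Hv' Hu'].
  unfold phi. rewrite rot_fan, is_dart_fan by auto.
  destruct (phi_fan_step n u v Hn Hu Hv) as [Hface Hdist].
  split; [split; auto; apply prevc_In; auto | split; auto].
Qed.

Lemma same_face_face_of d e : same_face n T d e -> face_of n d = face_of n e.
Proof.
  induction 1 as [d e [Hd He]| | |]; subst; auto.
  - symmetry. apply is_dart_phi. auto.
  - congruence.
Qed.

Lemma same_face_rep d : is_dart n T d -> same_face n T d (face_rep n (face_of n d)).
Proof.
  remember (dist_to_rep n d) as m eqn:Em. revert d Em.
  induction m as [m IH] using (well_founded_induction lt_wf).
  intros d Em Hd.
  destruct (is_dart_phi d Hd) as [Hd' [Hf Hm]].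
  destruct (Nat.eq_dec m 0) as [Z|Z].
  - subst m. destruct d as [u v]. unfold T in Hd. rewrite is_dart_fan in Hd by auto.
    destruct Hd as [Hu Hv]. rewrite <- (dist_to_rep_0 n u v Hn Hu Hv) by auto.
    apply rst_refl.
  - destruct Hm as [Hm|Hm]; [lia|].
    apply rst_trans with (phi n T d).
    + apply rst_step. split; auto.
    + rewrite <- Hf. apply (IH (dist_to_rep n (phi n T d))); auto. lia.
Qed.

Lemma same_face_iff d e : is_dart n T d -> is_dart n T e ->
  (same_face n T d e <-> face_of n d = face_of n e).
Proof.
  intros Hd He. split; [apply same_face_face_of|]. intro E.
  apply rst_trans with (face_rep n (face_of n d)); [apply same_face_rep; auto|].
  rewrite E. apply rst_sym. apply same_face_rep; auto.
Qed.

Lemma face_of_dart_valid d : is_dart n T d -> valid_face n (face_of n d).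
Proof.
  destruct d as [u v]. unfold T. rewrite is_dart_fan by auto. intros [Hu Hv].
  apply face_of_valid; auto.
Qed.

Lemma face_rep_dart f : valid_face n f -> is_dart n T (face_rep n f) /\ face_of n (face_rep n f) = f.
Proof.
  intro Hf. destruct (face_rep_spec n f Hn Hf) as [H1 [H2 H3]].
  destruct (face_rep n f) as [u v] eqn:Ec. simpl in *.
  unfold T. rewrite is_dart_fan by auto. auto.
Qed.

Lemma inner_dart_iff d : inner_dart n T d <-> is_dart n T d /\ face_of n d <> Outer.
Proof.
  destruct (face_rep_dart Outer I) as [Ho Fo].
  change (face_rep n Outer) with (outer_dart n) in Ho, Fo.
  unfold inner_dart. split; intros [Hd H]; split; auto; intro E.
  - apply H. apply same_face_iff; auto. congruence.
  - apply H. rewrite <- Fo. apply same_face_iff; auto.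
Qed.

End FanFaces.

Definition triangle_edges (i : nat) : list (node * node) :=
  [(Wh i 1, SB 1 (i+2)); (Wh i 1, SB 1 (i+3)); (Wh i 1, Ce i);
   (Wh i (i+2), SB (i+2) (i+3)); (Wh i (i+2), SB (i+2) 1); (Wh i (i+2), Ce i);
   (Wh i (i+3), SB (i+3) 1); (Wh i (i+3), SB (i+3) (i+2)); (Wh i (i+3), Ce i)].

Lemma dimer_edges_fan n : dimer_edges (fan n) = flat_map triangle_edges (seq 0 (n - 2)).
Proof.
  unfold dimer_edges. rewrite length_fan. apply flat_map_ext_in.
  intros i Hi. apply in_seq in Hi. rewrite tri_fan by lia. simpl.
  split_nat_tests. reflexivity.
Qed.

Lemma In_dimer_edges_fan n i e : i < n - 2 -> In e (triangle_edges i) ->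
  In e (dimer_edges (fan n)).
Proof.
  intros. rewrite dimer_edges_fan, in_flat_map. exists i. split; auto. apply in_seq. lia.
Qed.

Lemma black_degree_side n a b : 3 <= n -> fan_node n (SB a b) ->
  black_degree (fan n) (SB a b) = length (fan_side_triangles n a b).
Proof.
  intros Hn Hv.
  rewrite <- (length_map (fun i => Wh i a)), <- side_whites_fan by auto.
  unfold side_whites. rewrite length_map.
  unfold black_degree. rewrite dimer_edges_fan, filter_flat_map, length_flat_map, length_fan.
  rewrite <- Nat.mul_1_r. apply list_sum_map_indicator. intros i Hi. apply in_seq in Hi. rewrite tri_fan by lia.
  cbn [filter triangle_edges snd has_corner]. rewrite ?node_eqb_beq. cbn [node_beq].
  simpl in Hv. split_nat_tests; reflexivity.
Qed.

Lemma black_degree_centre n i : i < n - 2 -> black_degree (fan n) (Ce i) = 3.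
Proof.
  intros Hi. unfold black_degree.
  rewrite dimer_edges_fan, filter_flat_map, length_flat_map.
  rewrite (list_sum_map_indicator (Nat.eqb i) 3).
  - replace (filter (Nat.eqb i) (seq 0 (n - 2))) with [i]; [reflexivity|].
    apply StronglySorted_lt_ext.
    + repeat constructor.
    + apply StronglySorted_filter, StronglySorted_seq.
    + intro x. rewrite filter_In, in_seq, Nat.eqb_eq. simpl. lia.
  - intros j _. cbn [filter triangle_edges snd]. rewrite ?node_eqb_beq. cbn [node_beq].
    rewrite (Nat.eqb_sym i j). destruct (j =? i); reflexivity.
Qed.

Definition is_boundary_face (f : face) : Prop :=
  match f with Corner _ | Edge _ => True | _ => False end.

Lemma triangle_edge_darts n i e : 3 <= n -> i < n - 2 -> In e (triangle_edges i) ->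
  is_dart n (fan n) (arrow_tgt e) /\ is_dart n (fan n) (arrow_src e).
Proof.
  intros Hn Hi He.
  assert (G : fan_node n (fst e) /\ In (snd e) (fan_rot n (fst e))).
  { unfold triangle_edges in He. simpl in He.
    repeat (destruct He as [He|He];
            [subst e; simpl; unfold fan_rot; split_nat_tests; simpl; split; [lia|solve_In]|]).
    contradiction. }
  destruct G as [G1 G2]. destruct (fan_rot_sym n _ _ Hn G1 G2).
  unfold arrow_src, arrow_tgt. rewrite !is_dart_fan by auto. auto.
Qed.

Lemma boundary_edge_faces n i e : 3 <= n -> i < n - 2 -> In e (triangle_edges i) ->
  black_degree (fan n) (snd e) = 1 ->
  is_boundary_face (face_of n (arrow_src e)) /\ is_boundary_face (face_of n (arrow_tgt e)).
Proof.
  intros Hn Hi He. unfold triangle_edges in He. simpl in He.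
  repeat (destruct He as [He|He]; [subst e; unfold arrow_src, arrow_tgt; simpl;
    first [ rewrite black_degree_centre by lia; discriminate
          | rewrite black_degree_side by (simpl; lia);
            unfold fan_side_triangles, fan_spoke_triangles, face_of;
            split_nat_tests; simpl; intro; try discriminate; split; exact I ]|]).
  contradiction.
Qed.

Lemma boundary_edge_fan n i e : 3 <= n -> i < n - 2 -> In e (triangle_edges i) ->
  black_degree (fan n) (snd e) = 1 -> boundary_edge (fan n) e.
Proof.
  intros Hn Hi He D. split; auto.
  unfold reduced_edges. apply filter_In. split; [eapply In_dimer_edges_fan; eauto|].
  rewrite D. reflexivity.
Qed.

Ltac nodes_eq := match goal with
  | |- (_, _) = (_, _) => f_equal; nodes_eq
  | |- _ = _ => f_equal; lia
  end.

Ltac boundary_witness e i :=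
  exists e; split;
  [ apply (boundary_edge_fan _ i); [lia | lia | unfold triangle_edges; cbn [In];
      repeat first [left; first [reflexivity | nodes_eq] | right]
     | cbn [snd]; rewrite black_degree_side by (simpl; lia);
       unfold fan_side_triangles, fan_spoke_triangles; split_nat_tests; reflexivity ]
  | unfold arrow_src, arrow_tgt; cbn [face_of fst snd]; unfold succv; split_nat_tests;
    first [left; first [reflexivity | nodes_eq] | right; first [reflexivity | nodes_eq]] ].

(* The corner face at v_j and the edge face at v_j v_{j+1} both touch the
   edge of G from the white node at v_j to the black node on v_j v_{j+1}. *)
Lemma boundary_face_witness n f : 3 <= n -> valid_face n f -> is_boundary_face f ->
  exists e, boundary_edge (fan n) e /\
            (face_of n (arrow_src e) = f \/ face_of n (arrow_tgt e) = f).
Proof.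
  intros Hn Hf Hb.
  destruct f as [|j|j|k]; simpl in Hf, Hb; try contradiction.
  - destruct (Nat.eq_dec j 1) as [E1|E1]; [subst j; boundary_witness (Wh 0 1, SB 1 2) 0|].
    destruct (Nat.eq_dec j n) as [En|En];
      [subst j; boundary_witness (Wh (n-3) n, SB n (n-1)) (n-3)|].
    boundary_witness (Wh (j-2) j, SB j (j+1)) (j-2).
  - destruct (Nat.eq_dec j 1) as [E1|E1]; [subst j; boundary_witness (Wh 0 1, SB 1 2) 0|].
    destruct (Nat.eq_dec j n) as [En|En];
      [subst j; boundary_witness (Wh (n-3) n, SB n 1) (n-3)|].
    boundary_witness (Wh (j-2) j, SB j (j+1)) (j-2).
Qed.

(* The outer face gets the junk label [Bd 0]; no arrow of the reduced quiver
   touches it. *)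
Definition face_label (f : face) : qlabel :=
  match f with
  | Outer => Bd 0
  | Corner j => Bd (2 * j - 1)
  | Edge j => Bd (2 * j)
  | Inner k => Int k
  end.

Lemma face_label_inj n f g : valid_face n f -> valid_face n g -> f <> Outer -> g <> Outer ->
  face_label f = face_label g -> f = g.
Proof. destruct f, g; simpl; intros; try congruence; inversion H3; f_equal; lia. Qed.

Lemma face_label_surj n l : valid_label n l ->
  exists f, valid_face n f /\ f <> Outer /\ face_label f = l.
Proof.
  destruct l as [k|k]; simpl; intro Hl.
  - destruct (Nat.Even_or_Odd k) as [[j Ej]|[j Ej]].
    + exists (Edge j). simpl. split; [lia|split; [discriminate|f_equal; lia]].
    + exists (Corner (j+1)). simpl. split; [lia|split; [discriminate|f_equal; lia]].
  - exists (Inner k). simpl. split; [lia|split; [discriminate|auto]].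
Qed.

Definition arrow_labels (n : nat) (e : node * node) : qlabel * qlabel :=
  (face_label (face_of n (arrow_src e)), face_label (face_of n (arrow_tgt e))).

Definition triangle_arrows (n i : nat) : list (qlabel * qlabel) :=
  if i =? 0 then [(Bd 1, Bd 2); (Bd 2, Int 1); (Bd 3, Bd 4); (Bd 2, Bd 3); (Bd 4, Bd 2);
                  (Bd 4, Bd 5); (Int 1, Bd 4)]
  else if i =? n - 3 then
    [(Bd (2*n), Bd 1); (Int (n-3), Bd (2*n)); (Bd (2*n-3), Bd (2*n-2));
     (Bd (2*n-2), Int (n-3)); (Bd (2*n-1), Bd (2*n)); (Bd (2*n-2), Bd (2*n-1));
     (Bd (2*n), Bd (2*n-2))]
  else [(Int i, Int (i+1)); (Bd (2*i+3), Bd (2*i+4)); (Bd (2*i+4), Int i);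
        (Bd (2*i+4), Bd (2*i+5)); (Int (i+1), Bd (2*i+4))].

Ltac labels_eq := cbn [face_label]; repeat match goal with
  | |- (_ :: _) = (_ :: _) => f_equal
  | |- (_, _) = (_, _) => f_equal
  | |- Bd _ = Bd _ => f_equal
  | |- Int _ = Int _ => f_equal
  end; try reflexivity; try lia.

(* For n = 3 the only triangle is both the first and the last one, so the
   case split of [triangle_arrows] needs n >= 4. *)
Lemma reduced_triangle_arrows n i : 4 <= n -> i < n - 2 ->
  map (arrow_labels n)
      (filter (fun e => negb (black_degree (fan n) (snd e) =? 2)) (triangle_edges i))
  = triangle_arrows n i.
Proof.
  intros Hn Hi. unfold triangle_edges. cbn [filter snd].
  rewrite !black_degree_centre by lia.
  rewrite !black_degree_side by (simpl; lia).
  unfold fan_side_triangles, fan_spoke_triangles, arrow_labels, arrow_src, arrow_tgt,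
    triangle_arrows.
  repeat (try (exfalso; lia); split_nat_test; cbn [length app]).
  all: cbn [filter negb map fst snd face_of face_label]; split_nat_tests; labels_eq.
Qed.

Lemma reduced_edges_fan n : 4 <= n ->
  map (arrow_labels n) (reduced_edges (fan n))
  = flat_map (triangle_arrows n) (seq 0 (n - 2)).
Proof.
  intro Hn. unfold reduced_edges. rewrite dimer_edges_fan, filter_flat_map, map_flat_map.
  apply flat_map_ext_in. intros i Hi. apply in_seq in Hi. apply reduced_triangle_arrows; lia.
Qed.

Definition x_pair (i : nat) : list (qlabel * qlabel) :=
  [(Bd (2*i+3), Bd (2*i+4)); (Bd (2*i+4), Bd (2*i+5))].

Lemma map_seq_pairs {B} (h : nat -> B) m s :
  map h (seq (2*s+4) (2*m)) = flat_map (fun i => [h (2*i+4); h (2*i+5)]) (seq s m).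
Proof.
  revert s; induction m as [|m IH]; intro s.
  - replace (2 * 0) with 0 by lia. reflexivity.
  - replace (2 * S m) with (S (S (2 * m))) by lia. cbn [seq map flat_map app].
    replace (S (2*s+4)) with (2*s+5) by lia.
    replace (S (2*s+5)) with (2*(S s)+4) by lia. rewrite IH. reflexivity.
Qed.

Lemma x_arrows_split m : x_arrows (m + 4) =
  [(Bd (2*m+8), Bd 1); (Bd 1, Bd 2); (Bd 2, Bd 3); (Bd 3, Bd 4); (Bd 4, Bd 5)]
  ++ flat_map x_pair (seq 1 m) ++
  [(Bd (2*m+5), Bd (2*m+6)); (Bd (2*m+6), Bd (2*m+7)); (Bd (2*m+7), Bd (2*m+8))].
Proof.
  unfold x_arrows.
  replace (2 * (m + 4)) with (5 + (2 * m + 3)) by lia.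
  rewrite seq_app, map_app.
  replace (seq (1 + 5) (2 * m + 3)) with (seq (2 * 1 + 4) (2 * m) ++ seq (2 * m + 6) 3).
  2:{ replace (2 * m + 6) with (2 * 1 + 4 + 2 * m) by lia. rewrite <- seq_app. f_equal; lia. }
  rewrite map_app, map_seq_pairs.
  f_equal; [cbn [seq map]; split_nat_tests; labels_eq|].
  f_equal.
  - apply flat_map_ext_in. intros i Hi. apply in_seq in Hi. unfold x_pair.
    split_nat_tests. labels_eq.
  - cbn [seq map]. split_nat_tests. labels_eq.
Qed.

Lemma triangle_arrows_middle n i : 1 <= i -> i + 3 < n ->
  Permutation (triangle_arrows n i)
    (x_pair i ++ [(Int i, Int (i + 1))] ++ [(Int (i + 1), Bd (2 * i + 4))]
     ++ [(Bd (2 * i + 4), Int i)]).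
Proof.
  intros Hi Hin. unfold triangle_arrows, x_pair. split_nat_tests. cbn [app].
  perm_solve labels_eq.
Qed.

(* Triangle 0 carries y_4 and triangle n-3 carries y_{2n}; each triangle i in
   between carries x_{2i+4}, x_{2i+5}, alpha_i, beta_i and gamma_i. *)
Lemma Permutation_triangle_arrows n : 4 <= n ->
  Permutation (flat_map (triangle_arrows n) (seq 0 (n - 2))) (QF_arrows n).
Proof.
  intro Hn. remember (n - 4) as m eqn:Em. replace n with (m + 4) in * by lia. clear Em Hn.
  assert (Hs : seq 0 (m + 4 - 2) = 0 :: seq 1 m ++ [m + 1]).
  { replace (m + 4 - 2) with (S (S m)) by lia. rewrite seq_S. cbn [seq app].
    replace (0 + S m) with (m + 1) by lia. reflexivity. }
  rewrite Hs. cbn [flat_map]. rewrite flat_map_app. cbn [flat_map]. rewrite !app_nil_r.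
  eapply perm_trans.
  { apply Permutation_app_head, Permutation_app_tail.
    eapply perm_trans.
    { apply Permutation_flat_map_pointwise. intros i Hi. apply in_seq in Hi.
      apply triangle_arrows_middle; lia. }
    eapply perm_trans; [apply Permutation_flat_map_app|].
    apply Permutation_app_head.
    eapply perm_trans; [apply Permutation_flat_map_app|].
    apply Permutation_app_head.
    apply Permutation_flat_map_app. }
  rewrite !flat_map_singleton.
  unfold triangle_arrows. split_nat_tests.
  unfold QF_arrows. rewrite x_arrows_split.
  replace (m + 4 - 4) with m by lia.
  replace (m + 4 - 3) with (S m) by lia.
  replace (map (fun k => (Int k, Bd (2 * k + 2))) (seq 1 (S m)))
    with ((Int 1, Bd 4) :: map (fun i => (Int (i + 1), Bd (2 * i + 4))) (seq 1 m)).
  2:{ cbn [seq map]. f_equal. rewrite <- (seq_shift m 1), map_map.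
      apply map_ext. intro i. labels_eq. }
  rewrite seq_S, map_app. cbn [map].
  rewrite <- !app_assoc. cbn [app].
  perm_solve labels_eq.
Qed.

Lemma reduced_edge_triangle n e : In e (reduced_edges (fan n)) ->
  exists i, i < n - 2 /\ In e (triangle_edges i).
Proof.
  unfold reduced_edges. rewrite filter_In, dimer_edges_fan, in_flat_map.
  intros [[i [Hi He]] _]. apply in_seq in Hi. exists i. split; [lia | exact He].
Qed.

Lemma boundary_vertex_fan n d : 3 <= n -> inner_dart n (fan n) d ->
  ((exists e, boundary_edge (fan n) e /\
      (same_face n (fan n) d (arrow_src e) \/ same_face n (fan n) d (arrow_tgt e)))
   <-> is_boundary_face (face_of n d)).
Proof.
  intros Hn Hd. apply inner_dart_iff in Hd; auto. destruct Hd as [Hd _].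
  split.
  - intros [e [[Hr Hdeg] Hs]].
    destruct (reduced_edge_triangle n e Hr) as [i [Hi He]].
    destruct (boundary_edge_faces n i e Hn Hi He Hdeg) as [B1 B2].
    destruct Hs as [Hs|Hs]; apply (same_face_face_of n Hn) in Hs; rewrite Hs; auto.
  - intro B.
    destruct (boundary_face_witness n (face_of n d) Hn (face_of_dart_valid n Hn d Hd) B)
      as [e [Be Fe]].
    exists e. split; auto.
    destruct (reduced_edge_triangle n e (proj1 Be)) as [i [Hi He]].
    destruct (triangle_edge_darts n i e Hn Hi He) as [D1 D2].
    destruct Fe as [Fe|Fe]; [left|right]; apply same_face_iff; auto.
Qed.

Lemma reduced_quiver_is_fan n A : 3 <= n ->
  Permutation (map (arrow_labels n) (reduced_edges (fan n))) A ->
  reduced_quiver_is n (fan n) A.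
Proof.
  intros Hn HP. exists (fun d => face_label (face_of n d)).
  split; [|split; [|split; [|split; [|split]]]].
  - intros d e Hd He. apply inner_dart_iff in Hd, He; auto.
    destruct Hd as [Hd Od]. destruct He as [He Oe].
    rewrite same_face_iff by auto. split; [intro E; rewrite E; auto|].
    apply face_label_inj with n; auto; apply face_of_dart_valid; auto.
  - intros d Hd. apply inner_dart_iff in Hd; auto. destruct Hd as [Hd Od].
    pose proof (face_of_dart_valid n Hn d Hd) as V.
    destruct (face_of n d); simpl in *; try congruence; lia.
  - intros l Hl. destruct (face_label_surj n l Hl) as [f [Vf [Of Lf]]].
    destruct (face_rep_dart n Hn f Vf) as [Rd Rf].
    exists (face_rep n f). rewrite Rf. split; auto.
    apply inner_dart_iff; auto. rewrite Rf. auto.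
  - intros j Hj. unfold corner_dart, edge_dart. cbn [face_of]. rewrite !Nat.eqb_refl. auto.
  - intros d Hd. rewrite boundary_vertex_fan by auto.
    apply inner_dart_iff in Hd; auto. destruct Hd as [_ Od].
    destruct (face_of n d) as [|j|j|k]; simpl; [congruence | | |].
    1,2: split; eauto.
    split; [contradiction | intros [? E]; discriminate].
  - exact HP.
Qed.

Theorem proposition3p2 :
  (forall n : nat, 4 <= n -> reduced_quiver_is n (fan n) (QF_arrows n))
  /\ reduced_quiver_is 3 (fan 3) QF3_arrows.
Proof.
  split.
  - intros n Hn. apply reduced_quiver_is_fan; [lia|].
    rewrite reduced_edges_fan by auto. apply Permutation_triangle_arrows; auto.
  - apply reduced_quiver_is_fan; [lia|]. vm_compute. perm_solve labels_eq.
Qed.
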